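(* Let $T>0$, let $f:(0,T)\to\mathbb{R}$ be nondecreasing and $g:(0,T)\to\mathbb{R}$ be of bounded variation, both left-continuous and bounded, with $f\ge g$ on $(0,T)$, and suppose there is $C>0$ such that: (i) for every $\varepsilon>0$, every $t$ with $f(t)>g(t)+\varepsilon$ and every $t'$ with $0\le t'-t<\varepsilon/C$, $f(t')=f(t)$ and $f(t')>g(t')$; (ii) $f(t^+)-f(t)=[g(t^+)-g(t)]^+$ for all $t$; (iii) $g(t_2)-g(t_1)\le C(t_2-t_1)$ for all $t_1<t_2$ in $[a,b)$ whenever $[a,b)\subset\{f>g\}$. Then for every $[a,b)\subset(0,T)$, $$(\partial_tg)^+([a,b))\le f(b)-f(a)+C\,\mathcal{L}^1([a,b)\cap\{f>g\}).$$
   Context: $(\partial_tg)^+$ is the positive part of the distributional derivative of $g$; for left-continuous $g$, $(\partial_tg)^+([a,b))=\sup\{\sum_{i=1}^m(g(t_i)-g(t_{i-1}))^+:a=t_0<t_1<\dots<t_m=b\}$. $h(t^+)$ denotes the right limit. *)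

From HB Require Import structures.
From mathcomp Require Import all_boot all_order all_algebra.
From mathcomp Require Import all_classical all_reals all_analysis.
Set Implicit Arguments. Unset Strict Implicit. Unset Printing Implicit Defensive.
Import Order.TTheory GRing.Theory Num.Theory.
Import numFieldNormedType.Exports.
Local Open Scope classical_set_scope.
Local Open Scope ring_scope.

(* Positive variation of g along a partition s of [a,b] (same conventions as
   the library's [variation]): sum of (g(t_i) - g(t_{i-1}))^+ . *)
Definition pos_variation {R : realType} (a b : R) (g : R -> R) (s : seq R) : R :=
  let G := g \o nth b (a :: s) in
  \sum_(0 <= n < size s) Num.max (G n.+1 - G n) 0.

(* (\partial_t g)^+([a,b)) for left-continuous g :
   sup over partitions a = t_0 < ... < t_m = b of sum (g t_i - g t_{i-1})^+ *)
Definition pos_deriv_measure {R : realType} (a b : R) (g : R -> R) : \bar R :=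
  ereal_sup [set (pos_variation a b g s)%:E | s in itv_partition a b].

Definition BV_open {R : realType} (T : R) (g : R -> R) : Prop :=
  exists M : R, forall a b : R, 0 < a -> a <= b -> b < T ->
    (total_variation a b g <= M%:E)%E.

Definition left_cont {R : realType} (h : R -> R) (t : R) : Prop :=
  h x @[x --> t^'-] --> h t.

Definition rlim {R : realType} (h : R -> R) (t : R) : R :=
  lim (h x @[x --> t^'+]).

From HB Require Import structures.
From mathcomp Require Import all_boot all_order all_algebra.
From mathcomp Require Import all_classical all_reals all_analysis.
From mathcomp Require Import lra.
Import Order.TTheory GRing.Theory Num.Theory.
Import numFieldNormedType.Exports.
Local Open Scope classical_set_scope.
Local Open Scope ring_scope.

(* Bound each increment (g t - g s)^+ of a partition separately.  Let
   [s, u) be the longest interval starting at s and contained in [s, t] on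
   which f > g.  Condition (i) makes f locally constant to the right of every
   point of {f > g}, so by left-continuity f is constant on [s, u];
   condition (iii) and left-continuity give g u - g s <= C (u - s); and if
   u < t, maximality together with (i) forces f u = g u, whence
   g t - g u <= f t - f u.  Summing over the partition, the intervals [s, u)
   are disjoint subsets of [a, b) ∩ {f > g} and the increments of f
   telescope to f b - f a. *)

Section RealLemmas.
Context {R : realType}.

Lemma left_cont_le (h : R -> R) (s v c : R) : s < v -> left_cont h v ->
  (forall y, s < y -> y < v -> h y <= c) -> h v <= c.
Proof.
move=> sv hv hle; apply: (closed_cvg _ (@closed_le R c) _ _ hv).
by apply: filterS2 (nbhs_left_lt v) (nbhs_left_gt sv) => y yv sy; exact: hle.
Qed.

Lemma maximal_prefix (P : R -> Prop) (s t : R) : s <= t ->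
  (forall x, s <= x -> x < t -> P x ->
     exists2 d, 0 < d & forall y, x <= y -> y < x + d -> y < t -> P y) ->
  exists u, [/\ s <= u, u <= t, forall y, s <= y -> y < u -> P y &
                u < t -> ~ P u].
Proof.
move=> st Pright.
pose E := [set x | s <= x <= t /\ forall y, s <= y -> y < x -> P y].
have Es : E s by split=> [|y sy ys]; [rewrite lexx st | lra].
have Eub : ubound E t by move=> x [/andP[]].
have supE : has_sup E by split; [exists s | exists t].
have su : s <= sup E := sup_upper_bound supE Es.
have prefix y : s <= y -> y < sup E -> P y.
  by move=> sy /(sup_gt (ex_intro _ s Es))[x [_ Px] yx]; exact: Px.
exists (sup E); split=> //; first exact: ge_sup (ex_intro _ s Es) Eub.
move=> ut Pu; have [d d0 Pd] := Pright _ su ut Pu.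
pose w := Num.min t (sup E + d / 2).
have wt : w <= t by rewrite ge_min lexx.
have wd : w <= sup E + d / 2 by rewrite ge_min lexx orbT.
have uw : sup E < w by rewrite lt_min ut /=; lra.
have Ew : E w.
  split=> [|y sy yw]; first by apply/andP; split; lra.
  have [|uy] := ltP y (sup E); first exact: prefix.
  apply: Pd; lra.
by have := sup_upper_bound supE Ew; lra.
Qed.

Lemma lebesgue_measure_le (A B : set R) : A `<=` B ->
  (lebesgue_measure A <= lebesgue_measure B)%E.
Proof.
move=> AB; rewrite /lebesgue_measure /lebesgue_stieltjes_measure.
exact: le_mu_ext.
Qed.

Lemma lebesgue_measure_itv_co (x u : R) : x <= u ->
  lebesgue_measure `[x, u[%classic = (u - x)%:E.
Proof.
rewrite lebesgue_measure_itv /= lte_fin le_eqVlt => /orP[/eqP->|->].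
  by rewrite ltxx subrr.
by rewrite EFinB.
Qed.

Lemma pos_variation_cons (x b t : R) (g : R -> R) (s : seq R) :
  pos_variation x b g (t :: s) = Num.max (g t - g x) 0 + pos_variation t b g s.
Proof. by rewrite /pos_variation /= big_nat_recl. Qed.

End RealLemmas.

Section IncrementBound.
Context {R : realType} {T C : R} {f g : R -> R}.
Hypothesis C_gt0 : 0 < C.
Hypothesis f_nondecr : forall x y, 0 < x -> x <= y -> y < T -> f x <= f y.
Hypothesis f_left_cont : forall t, 0 < t -> t < T -> left_cont f t.
Hypothesis g_left_cont : forall t, 0 < t -> t < T -> left_cont g t.
Hypothesis g_le_f : forall t, 0 < t -> t < T -> g t <= f t.
Hypothesis f_flat_right : forall (eps t t' : R), 0 < eps -> 0 < t -> t < T ->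
  0 < t' -> t' < T -> f t > g t + eps -> 0 <= t' - t -> t' - t < eps / C ->
  f t' = f t /\ f t' > g t'.
Hypothesis g_slope_le : forall a b : R,
  (forall x, a <= x -> x < b -> 0 < x /\ x < T /\ g x < f x) ->
  forall t1 t2, a <= t1 -> t1 < t2 -> t2 < b -> g t2 - g t1 <= C * (t2 - t1).

Lemma gap_flat_right (x : R) : 0 < x -> x < T -> g x < f x ->
  exists2 d, 0 < d & forall y, x <= y -> y < x + d -> y < T ->
    f y = f x /\ g y < f y.
Proof.
move=> x0 xT gx.
have [eps eps0 gx_eps] : exists2 eps, 0 < eps & g x + eps < f x.
  by exists ((f x - g x) / 2); lra.
exists (eps / C) => [|y xy yd yT]; first exact: divr_gt0.
by apply: (@f_flat_right eps) => //; lra.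
Qed.

Lemma f_const_on_gap (s u : R) : 0 < s -> s <= u -> u < T ->
  (forall y, s <= y -> y < u -> g y < f y) -> f u = f s.
Proof.
move=> s0 su uT gap.
have [|v [sv vu fv uv]] := @maximal_prefix _ (fun y => f y = f s) s u su.
  move=> x sx xu fx; have x0 : 0 < x by lra.
  have [d d0 flat] := gap_flat_right x x0 (lt_trans xu uT) (gap x sx xu).
  by exists d => // y xy yd yu; rewrite -fx; case: (flat y xy) => //; lra.
have fvs : f v = f s.
  have [sv'|] := ltP s v; last by move=> vs; have -> : v = s by lra.
  apply/eqP; rewrite eq_le (f_nondecr s v s0 (ltW sv')) ?andbT; last by lra.
  apply: (@left_cont_le _ f s) => //; first by apply: f_left_cont; lra.
  by move=> y sy yv; rewrite fv // ltW.
have [/uv //|uv'] := ltP v u.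
by have -> : u = v by lra.
Qed.

Lemma g_rise_on_gap (s u : R) : 0 < s -> s <= u -> u < T ->
  (forall y, s <= y -> y < u -> g y < f y) -> g u - g s <= C * (u - s).
Proof.
move=> s0 su uT gap.
have [su'|us] := ltP s u; last first.
  have -> : u = s by lra.
  by rewrite !subrr mulr0.
have gap_in_domain x : s <= x -> x < u -> 0 < x /\ x < T /\ g x < f x.
  by move=> sx xu; split; [lra | split; [lra | exact: gap]].
have slope y (sy : s < y) (yu : y < u) :=
  g_slope_le s u gap_in_domain s y (lexx s) sy yu.
suff : g u <= g s + C * (u - s) by lra.
apply: (@left_cont_le _ g s) => //; first by apply: g_left_cont; lra.
move=> y sy yu; have := slope y sy yu.
have : C * (y - s) <= C * (u - s) by rewrite ler_pM2l // lerD2r ltW.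
lra.
Qed.

Lemma increment_bound (s t : R) : 0 < s -> s < t -> t < T ->
  exists u, [/\ s <= u, u <= t, forall y, s <= y -> y < u -> g y < f y &
    Num.max (g t - g s) 0 <= f t - f s + C * (u - s)].
Proof.
move=> s0 st tT.
have [|u [su ut gap ugap]] := @maximal_prefix _ (fun y => g y < f y) s t (ltW st).
  move=> x sx xt gx.
  have [d d0 flat] := gap_flat_right x (lt_le_trans s0 sx) (lt_trans xt tT) gx.
  by exists d => // y xy yd yt; case: (flat y xy yd); lra.
exists u; split => //.
have fus : f u = f s by apply: f_const_on_gap => //; lra.
have gus : g u - g s <= C * (u - s) by apply: g_rise_on_gap => //; lra.
have gtu : g t - g u <= f t - f u.
  have [ut'|tu] := ltP u t; last by rewrite (_ : t = u) ?subrr //; lra.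
  have : f u <= g u by rewrite leNgt; apply/negP; exact: ugap.
  have := g_le_f t (lt_trans s0 st) tT; lra.
have := f_nondecr s t s0 (ltW st) tT.
have : 0 <= C * (u - s) by rewrite mulr_ge0 ?subr_ge0 // ltW.
rewrite ge_max; lra.
Qed.

Lemma pos_variation_gap_bound (b : R) : b < T ->
  forall (s : seq R) (x : R), 0 < x -> itv_partition x b s ->
  exists U r, [/\ measurable U,
    U `<=` `[x, b[ `&` [set y | (0 < y < T) /\ g y < f y],
    lebesgue_measure U = r%:E & pos_variation x b g s <= f b - f x + C * r].
Proof.
move=> bT; elim=> [|t s IH] x x0.
  move=> /itv_partition_nil ->; exists set0, 0; split => //; first exact: measure0.
  by rewrite /pos_variation big_geq // subrr mulr0 addr0.
move=> P; have xt : x < t by case: P => /= /andP[].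
have P' := itv_partition_cons P; have tb := itv_partition_le P'.
have [U [r [mU UG mUr var_le]]] := IH t (lt_trans x0 xt) P'.
have [u [xu ut gap incr]] := increment_bound x t x0 xt (le_lt_trans tb bT).
have U_ge_t y : U y -> t <= y by move=> /UG[]; rewrite /= in_itv /= => /andP[].
exists (`[x, u[ `|` U), (u - x + r); split.
- exact: measurableU.
- move=> y [|/UG [] /=].
    rewrite /= in_itv /= => /andP[xy yu].
    split; first by rewrite /= in_itv /=; apply/andP; split; lra.
    by split; [apply/andP; split; lra | exact: gap].
  rewrite in_itv /= => /andP[ty yb] yG.
  by split=> //; rewrite /= in_itv /=; apply/andP; split; lra.
- rewrite measureU //; last first.
    by rewrite -subset0 => y [] /=; rewrite in_itv /= => /andP[_ yu] /U_ge_t; lra.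
  by rewrite EFinD -mUr -(lebesgue_measure_itv_co x u xu).
- by rewrite pos_variation_cons mulrDr; lra.
Qed.

End IncrementBound.

Theorem lemma7p2 (R : realType) (T C : R) (f g : R -> R) :
  0 < T -> 0 < C ->
  (* f nondecreasing on (0,T) *)
  (forall x y, 0 < x -> x <= y -> y < T -> f x <= f y) ->
  (* g of bounded variation on (0,T) *)
  BV_open T g ->
  (* left-continuity *)
  (forall t, 0 < t -> t < T -> left_cont f t) ->
  (forall t, 0 < t -> t < T -> left_cont g t) ->
  (* boundedness *)
  (exists M : R, forall t, 0 < t -> t < T -> `|f t| <= M) ->
  (exists M : R, forall t, 0 < t -> t < T -> `|g t| <= M) ->
  (* f >= g *)
  (forall t, 0 < t -> t < T -> g t <= f t) ->
  (* (i) *)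
  (forall (eps t t' : R), 0 < eps -> 0 < t -> t < T -> 0 < t' -> t' < T ->
     f t > g t + eps -> 0 <= t' - t -> t' - t < eps / C ->
     f t' = f t /\ f t' > g t') ->
  (* (ii) *)
  (forall t, 0 < t -> t < T ->
     rlim f t - f t = Num.max (rlim g t - g t) 0) ->
  (* (iii) *)
  (forall a b : R,
     (forall x, a <= x -> x < b -> 0 < x /\ x < T /\ g x < f x) ->
     forall t1 t2, a <= t1 -> t1 < t2 -> t2 < b ->
       g t2 - g t1 <= C * (t2 - t1)) ->
  (* conclusion *)
  forall a b : R, 0 < a -> a < b -> b < T ->
    (pos_deriv_measure a b g <=
     (f b - f a)%:E + C%:E * lebesgue_measure
        ([set x : R | (a <= x < b)%R] `&` [set x : R | (0 < x < T)%R /\ (g x < f x)%R]))%E.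
Proof.
move=> _ C_gt0 f_nondecr _ f_left_cont g_left_cont _ _ g_le_f f_flat_right _
  g_slope_le a b a_gt0 _ bT.
apply: ge_ereal_sup => _ [s s_part <-].
have [U [r [mU UG mUr var_le]]] := pos_variation_gap_bound C_gt0 f_nondecr
  f_left_cont g_left_cont g_le_f f_flat_right g_slope_le b bT s a a_gt0 s_part.
apply: (@le_trans _ _ ((f b - f a)%:E + C%:E * r%:E)%E).
  by rewrite -EFinM -EFinD lee_fin.
rewrite leeD2l // lee_pmul2l ?lte_fin // -mUr.
by apply: lebesgue_measure_le => y /UG[]; rewrite /= in_itv.
Qed.
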